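(* Let $m\le n$ be positive integers and $\eta\in[0,1]$, $\zeta,\Delta,\alpha$ reals with $\Delta>0$ and $\alpha\ge 2\Delta+\zeta$. Let $\mathbf{A}'$ be an $(\eta,n(1-\zeta))$-block source over $\mathbb{F}_2^{m\times n}$ and $\mathbf{x}$ a random variable over $\mathbb{F}_2^n$ independent of $\mathbf{A}'$ with $H_\infty(\mathbf{x})\ge\alpha n$. Then there exists $T\subseteq[m]$ with $|T|\ge(1-\eta)m$ such that $(\mathbf{A}'\mathbf{x})_T$ (the coordinates of $\mathbf{A}'\mathbf{x}\in\mathbb{F}_2^m$ indexed by $T$) is within statistical distance $|T|\cdot 2^{-\Delta n}$ of the uniform distribution on $\mathbb{F}_2^{|T|}$.
   Context: $H_\infty(X)=-\log_2\max_x\Pr[X=x]$. For a matrix $A$, $A_i$ is its $i$-th row and $A_{[i]}$ its first $i$ rows. A random variable $\mathbf{A}'$ over $\mathbb{F}_2^{m\times n}$ is an $(\eta,n')$-block source if there exists $S\subseteq[m]$ with $|S|\le\eta m$ such that for every $A\in\mathrm{supp}(\mathbf{A}')$ and every $i\notin S$, $H_\infty(\mathbf{A}'_i\mid\mathbf{A}'_{[i-1]}=A_{[i-1]})\ge n'$. *)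

From HB Require Import structures.
From mathcomp Require Import all_boot all_algebra.
From Stdlib Require Import Reals.

Set Implicit Arguments.
Unset Strict Implicit.
Unset Printing Implicit Defensive.

Local Open Scope R_scope.

Notation F2 := 'F_2.

Definition Rsum (T : finType) (f : T -> R) : R := \big[Rplus/0]_(t : T) f t.

Definition Rmaxf (T : finType) (f : T -> R) : R := \big[Rmax/0]_(t : T) f t.

Definition is_distr (T : finType) (p : T -> R) : Prop :=
  (forall t, 0 <= p t) /\ Rsum p = 1.

Definition log2 (x : R) : R := ln x / ln 2.

Definition H_inf (T : finType) (p : T -> R) : R := - log2 (Rmaxf p).

(* B_[i-1] = A_[i-1] : the rows strictly before (0-indexed) row i agree *)
Definition prefix_eq (m n : nat) (i : 'I_m) (B A : 'M[F2]_(m, n)) : bool :=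
  [forall j : 'I_m, ltn j i ==> (row j B == row j A)].

Definition cond_row (m n : nat) (pA : 'M[F2]_(m, n) -> R) (A : 'M[F2]_(m, n))
    (i : 'I_m) : 'rV[F2]_n -> R :=
  fun r =>
    Rsum (fun B => if prefix_eq i B A && (row i B == r) then pA B else 0)
    / Rsum (fun B => if prefix_eq i B A then pA B else 0).

Definition block_source (m n : nat) (pA : 'M[F2]_(m, n) -> R) (eta n' : R) : Prop :=
  exists S : {set 'I_m},
    INR #|S| <= eta * INR m /\
    forall A : 'M[F2]_(m, n), 0 < pA A ->
      forall i : 'I_m, i \notin S -> n' <= H_inf (cond_row pA A i).

(* the coordinates of v indexed by T (in increasing order) *)
Definition proj_T (m : nat) (T : {set 'I_m}) (v : 'cV[F2]_m) : 'cV[F2]_#|T| :=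
  \col_(j < #|T|) v (enum_val j) ord0.

Definition dist_AxT (m n : nat) (pA : 'M[F2]_(m, n) -> R) (px : 'cV[F2]_n -> R)
    (T : {set 'I_m}) : 'cV[F2]_#|T| -> R :=
  fun v => Rsum (fun A => Rsum (fun x =>
    if proj_T T (mulmx A x) == v then pA A * px x else 0)).

Definition uniform (T : finType) : T -> R := fun _ => / INR #|T|.

Definition stat_dist (T : finType) (p q : T -> R) : R :=
  / 2 * Rsum (fun t => Rabs (p t - q t)).

Arguments dist_AxT {m n} pA px T _.
Arguments proj_T {m} T v.
Arguments cond_row {m n} pA A i _.

From HB Require Import structures.
From mathcomp Require Import all_boot all_algebra.
From Stdlib Require Import Reals Lra Classical.
From mathcomp Require Import Rstruct.

Set Implicit Arguments.
Unset Strict Implicit.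
Unset Printing Implicit Defensive.

(* Let T be the complement of the exceptional set S of the block source.  A hybrid
   argument bounds the distance of (A'x)_T from uniform by the sum, over j, of the
   bias of its j-th bit given x and the rows of A' above the j-th row of T, which
   determine all earlier bits.  Given that prefix, the j-th row r keeps min-entropy
   n(1-zeta) and x has min-entropy alpha n, so Cauchy-Schwarz and Parseval bound the
   bias of <r, x> by sqrt(2^n 2^(-alpha n) 2^(-n(1-zeta))) <= 2^(-Delta n). *)

Local Open Scope R_scope.

Section FiniteSums.
Variable T : finType.
Implicit Types f g : T -> R.

Lemma Rsum_ext f g : (forall t, f t = g t) -> Rsum f = Rsum g.
Proof. by move=> fg; apply: eq_bigr. Qed.

Lemma Rsum_le f g : (forall t, f t <= g t) -> Rsum f <= Rsum g.
Proof. by move=> fg; apply: big_ind2 => //; [lra | move=> *; lra]. Qed.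

Lemma Rsum_ge0 f : (forall t, 0 <= f t) -> 0 <= Rsum f.
Proof. by move=> f0; apply: big_ind => //; [lra | move=> *; lra]. Qed.

Lemma Rsum_ge_term f a : (forall t, 0 <= f t) -> f a <= Rsum f.
Proof.
move=> f0; rewrite /Rsum (bigD1 a) //=.
have : 0 <= \big[Rplus/0]_(t | t != a) f t by apply: big_ind => //; [lra | move=> *; lra].
lra.
Qed.

Lemma Rabs_Rsum_le f : Rabs (Rsum f) <= Rsum (fun t => Rabs (f t)).
Proof.
apply: (big_ind2 (fun a b => Rabs a <= b)).
- by rewrite Rabs_R0; lra.
- by move=> a b c d ab cd; apply: Rle_trans (Rabs_triang _ _) _; lra.
- by move=> t _; lra.
Qed.

Lemma Rsum_add f g : Rsum (fun t => f t + g t) = Rsum f + Rsum g.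
Proof. exact: big_split. Qed.

Lemma Rsum_scal c f : Rsum (fun t => c * f t) = c * Rsum f.
Proof. by rewrite /Rsum big_distrr. Qed.

Lemma Rsum_eq0 f : (forall t, f t = 0) -> Rsum f = 0.
Proof. by move=> f0; rewrite /Rsum big1. Qed.

Lemma Rsum_const c : Rsum (fun _ : T => c) = INR #|T| * c.
Proof.
rewrite /Rsum big_const cardE; elim: (enum T) => [|x s IH] /=; first lra.
by rewrite IH; case: (size s) => [|z] /=; lra.
Qed.

Lemma Rsum_pred1 a (F : T -> R) : Rsum (fun t => if t == a then F t else 0) = F a.
Proof. by rewrite /Rsum -big_mkcond big_pred1_eq. Qed.

Lemma Rsum_pred1C a (F : T -> R) : Rsum (fun t => if a == t then F t else 0) = F a.
Proof. by rewrite -(Rsum_pred1 a F); apply: Rsum_ext => t; rewrite eq_sym. Qed.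

End FiniteSums.

Arguments Rsum_ext {T f} g.

Lemma Rsum_swap (T U : finType) (F : T -> U -> R) :
  Rsum (fun t => Rsum (fun u => F t u)) = Rsum (fun u => Rsum (fun t => F t u)).
Proof. exact: exchange_big. Qed.

Lemma Rsum_pair (T U : finType) (F : T * U -> R) :
  Rsum F = Rsum (fun t => Rsum (fun u => F (t, u))).
Proof. by rewrite /Rsum pair_big; apply: eq_bigr => -[]. Qed.

Lemma Rsum_mul (T U : finType) (f : T -> R) (g : U -> R) :
  Rsum f * Rsum g = Rsum (fun t => Rsum (fun u => f t * g u)).
Proof. by rewrite /Rsum big_distrl; apply: eq_bigr => t _; rewrite big_distrr. Qed.

Lemma cauchy_schwarz (T : finType) (p a : T -> R) : (forall t, 0 <= p t) ->
  (Rsum (fun t => p t * a t)) ^ 2 <= Rsum p * Rsum (fun t => p t * a t ^ 2).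
Proof.
move=> p0.
have : 0 <= Rsum (fun t => Rsum (fun u => p t * p u * (a t - a u) ^ 2)).
  apply: Rsum_ge0 => t; apply: Rsum_ge0 => u.
  by apply: Rmult_le_pos; [apply: Rmult_le_pos | apply: pow2_ge_0].
rewrite (Rsum_ext (fun t => Rsum (fun u => p t * (p u * a u ^ 2))
    + Rsum (fun u => (p t * a t ^ 2) * p u) + (-2) * Rsum (fun u => (p t * a t) * (p u * a u)))).
  by rewrite !Rsum_add Rsum_scal -!Rsum_mul /=; nra.
by move=> t; rewrite -Rsum_scal -!Rsum_add; apply: Rsum_ext => u; ring.
Qed.

Lemma distr_has_pos (T : finType) (p : T -> R) : Rsum p = 1 -> exists t, 0 < p t.
Proof.
move=> p1; apply: NNPP => nopos.
have : Rsum p <= Rsum (fun _ : T => 0).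
  by apply: Rsum_le => t; apply: Rnot_lt_le => pt; apply: nopos; exists t.
by rewrite (@Rsum_eq0 _ (fun _ => 0)) //; lra.
Qed.

Lemma Rmaxf_ub (T : finType) (f : T -> R) (t : T) : f t <= Rmaxf f.
Proof.
have : forall s : seq T, t \in s -> f t <= \big[Rmax/0]_(i <- s) f i.
  elim=> [//|x s IH]; rewrite in_cons big_cons => /orP [/eqP ->|ts].
    exact: Rmax_l.
  by apply: Rle_trans (IH ts) _; apply: Rmax_r.
by apply; rewrite mem_index_enum.
Qed.

Lemma H_inf_mass_le (T : finType) (p : T -> R) beta :
  (exists t, 0 < p t) -> beta <= H_inf p -> forall t, p t <= Rpower 2 (- beta).
Proof.
move=> [t0 pt0] beta_le t.
have M0 : 0 < Rmaxf p by apply: Rlt_le_trans pt0 (Rmaxf_ub _ _).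
have ln2 : 0 < ln 2 by have := ln_lt_2; lra.
have lnM : ln (Rmaxf p) <= - beta * ln 2.
  move: beta_le; rewrite /H_inf /log2 => beta_le.
  have : beta * ln 2 <= - (ln (Rmaxf p) / ln 2) * ln 2 by apply: Rmult_le_compat_r; lra.
  have -> : - (ln (Rmaxf p) / ln 2) * ln 2 = - ln (Rmaxf p) by field; lra.
  lra.
apply: Rle_trans (Rmaxf_ub _ t) _.
rewrite -(exp_ln _ M0) /Rpower.
by case: (Rle_lt_or_eq_dec _ _ lnM) => [lt|->]; [left; apply: exp_increasing | lra].
Qed.

Lemma F2_0or1 (a : F2) : a = GRing.zero \/ a = GRing.one _.
Proof. by case: a => [[|[|k]]] //= a_lt; [left | right]; apply/val_inj. Qed.

Lemma INR_expn2 k : INR (expn 2 k) = 2 ^ k.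
Proof. by elim: k => [|k IH]; rewrite ?expn0 // expnS -multE mult_INR IH. Qed.

Lemma card_cV_F2 k : INR #|'cV[F2]_k| = 2 ^ k.
Proof. by rewrite card_mx card_Fp // muln1 INR_expn2. Qed.

Definition dotF2 n (r : 'rV[F2]_n) (y : 'cV[F2]_n) : F2 := (mulmx r y) ord0 ord0.

Definition sign2 (a : F2) : R := if a == GRing.zero then 1 else -1.

Definition chi n (r : 'rV[F2]_n) (y : 'cV[F2]_n) : R := sign2 (dotF2 r y).

Lemma sign2B (a b : F2) : sign2 (GRing.add a (GRing.opp b)) = sign2 a * sign2 b.
Proof. by rewrite /sign2; case: (F2_0or1 a) => ->; case: (F2_0or1 b) => -> /=; lra. Qed.

Lemma sign2D1 (a : F2) : sign2 (GRing.add a (GRing.one _)) = - sign2 a.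
Proof. by rewrite /sign2; case: (F2_0or1 a) => -> /=; lra. Qed.

Section DotF2.
Local Close Scope R_scope.
Local Open Scope ring_scope.
Import GRing.Theory.
Variable n : nat.
Implicit Types (r : 'rV[F2]_n) (y : 'cV[F2]_n).

Lemma dotF2Bl r r' y : dotF2 (r - r') y = dotF2 r y - dotF2 r' y.
Proof. by rewrite /dotF2 mulmxBl !mxE. Qed.

Lemma dotF2Dr r y y' : dotF2 r (y + y') = dotF2 r y + dotF2 r y'.
Proof. by rewrite /dotF2 mulmxDr !mxE. Qed.

Lemma dotF20l y : dotF2 0 y = 0.
Proof. by rewrite /dotF2 mul0mx mxE. Qed.

Lemma dotF2_delta r l : dotF2 r (delta_mx l 0) = r 0 l.
Proof.
rewrite /dotF2 mxE (bigD1 l) //= mxE !eqxx mulr1 big1 ?addr0 // => i /negbTE il.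
by rewrite mxE il mulr0.
Qed.

End DotF2.

Lemma chi_sum n (r : 'rV[F2]_n) :
  Rsum (chi r) = if r == GRing.zero then 2 ^ n else 0.
Proof.
case: eqP => [->|r_neq0].
  rewrite (Rsum_ext (fun _ => 1)); last by move=> y; rewrite /chi dotF20l /sign2 eqxx.
  by rewrite Rsum_const card_cV_F2 Rmult_1_r.
have [l rl] : exists l, r ord0 l = GRing.one _.
  apply: NNPP => no_one; apply: r_neq0; apply/matrixP => i j; rewrite ord1 !mxE.
  by case: (F2_0or1 (r ord0 j)) => // rj; case: no_one; exists j.
pose d : 'cV[F2]_n := delta_mx l ord0.
have shift : Rsum (chi r) = Rsum (fun y => chi r (GRing.add y d)).
  by rewrite /Rsum (reindex_inj (@GRing.addIr _ d)).
have flip : Rsum (fun y => chi r (GRing.add y d)) = - Rsum (chi r).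
  have -> : - Rsum (chi r) = -1 * Rsum (chi r) by ring.
  rewrite -Rsum_scal; apply: Rsum_ext => y.
  by rewrite /chi dotF2Dr dotF2_delta rl sign2D1; ring.
lra.
Qed.

Lemma parseval n (N : 'rV[F2]_n -> R) :
  Rsum (fun y => (Rsum (fun r => N r * chi r y)) ^ 2) = 2 ^ n * Rsum (fun r => N r ^ 2).
Proof.
rewrite (Rsum_ext (fun y => Rsum (fun r => Rsum (fun r' =>
    N r * N r' * chi (GRing.add r (GRing.opp r')) y)))); last first.
  move=> y; rewrite /= Rmult_1_r Rsum_mul; apply: Rsum_ext => r; apply: Rsum_ext => r'.
  by rewrite /chi dotF2Bl sign2B; ring.
rewrite Rsum_swap -Rsum_scal; apply: Rsum_ext => r.
rewrite Rsum_swap (Rsum_ext (fun r' => if r == r' then 2 ^ n * N r ^ 2 else 0)).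
  by rewrite Rsum_pred1C.
move=> r'; rewrite Rsum_scal chi_sum -[r == r']GRing.subr_eq0.
by case: eqP => [/eqP|_]; [rewrite GRing.subr_eq0 => /eqP <-|]; ring.
Qed.

(* The L1 form of the leftover hash lemma: Cauchy-Schwarz against [p], then
   [p <= a] and Parseval. *)
Lemma fourier_l1_sq_le n (p : 'cV[F2]_n -> R) (N : 'rV[F2]_n -> R) a c :
  (forall y, 0 <= p y) -> Rsum p = 1 -> (forall y, p y <= a) ->
  (forall r, 0 <= N r) -> (forall r, N r <= c) ->
  (Rsum (fun y => p y * Rabs (Rsum (fun r => N r * chi r y)))) ^ 2
    <= a * (2 ^ n * (c * Rsum N)).
Proof.
move=> p0 p1 pa N0 Nc.
have a0 : 0 <= a by apply: Rle_trans (p0 (const_mx GRing.zero)) (pa _).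
apply: Rle_trans (cauchy_schwarz _ p0) _; rewrite p1 Rmult_1_l.
set g := fun y => Rsum (fun r => N r * chi r y).
apply: (Rle_trans _ (Rsum (fun y => a * g y ^ 2))).
  apply: Rsum_le => y; rewrite pow2_abs.
  by apply: Rmult_le_compat_r; [apply: pow2_ge_0 | apply: pa].
rewrite Rsum_scal /g parseval; apply: Rmult_le_compat_l => //.
apply: Rmult_le_compat_l; first by apply: pow_le; lra.
rewrite -Rsum_scal; apply: Rsum_le => r; rewrite /= Rmult_1_r.
exact: Rmult_le_compat_r.
Qed.

Lemma col_mx_const_eqE k (M : 'cV[F2]_(1 + k)) (b : F2) (v : 'cV[F2]_k) :
  (M == col_mx (const_mx b) v) = (M ord0 ord0 == b) && (dsubmx M == v).
Proof.
rewrite -{1}[M]vsubmxK; apply/eqP/andP.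
- move=> /eq_col_mx [Mu Md]; split; last by rewrite Md.
  have -> : M ord0 ord0 = usubmx M ord0 ord0 by rewrite mxE; congr (M _ _); apply: val_inj.
  by rewrite Mu mxE eqxx.
- move=> [/eqP Mb /eqP Mv]; rewrite Mv; congr col_mx.
  by apply/matrixP => i j; rewrite !ord1 !mxE -Mb; congr (M _ _); apply: val_inj.
Qed.

Lemma Rsum_cV_cons k (F : 'cV[F2]_(1 + k) -> R) :
  Rsum F = Rsum (fun b : F2 => Rsum (fun v : 'cV[F2]_k => F (col_mx (const_mx b) v))).
Proof.
rewrite /Rsum pair_big /=.
pose h (p : F2 * 'cV[F2]_k) : 'cV[F2]_(1 + k) := col_mx (const_mx p.1) p.2.
pose g (v : 'cV[F2]_(1 + k)) : F2 * 'cV[F2]_k := (v ord0 ord0, dsubmx v).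
have gK : cancel g h by move=> v; apply/eqP; rewrite eq_sym col_mx_const_eqE !eqxx.
have hK : cancel h g.
  move=> [b v]; apply/eqP; rewrite /g xpair_eqE /= -col_mx_const_eqE.
  by rewrite -/(h (b, v)) -[h (b, v)]/(col_mx _ _).
rewrite (reindex h); last by exists g => x _; [apply: hK | apply: gK].
by apply: eq_bigr => -[].
Qed.

Section Hybrid.
Variables Om St : finType.
Implicit Types w : Om -> R.

Definition centered_eq (a b : F2) : R := (if a == b then 1 else 0) - / 2.

(* Twice the statistical distance from uniform of the image of [w] under [f], when
   [w] is a probability. *)
Definition l1_dist_unif k (f : Om -> 'cV[F2]_k) w : R :=
  Rsum (fun v => Rabs (Rsum (fun o => if f o == v then w o else 0) - Rsum w * (/ 2) ^ k)).

Definition bit_bias k (f : Om -> 'cV[F2]_k) (st : 'I_k -> Om -> St) w (j : 'I_k) : R :=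
  Rsum (fun b : F2 => Rsum (fun s : St => Rabs (Rsum (fun o =>
    if st j o == s then w o * centered_eq (f o j ord0) b else 0)))).

Lemma l1_dist_unif_cV0 (f : Om -> 'cV[F2]_0) w : l1_dist_unif f w = 0.
Proof.
apply: Rsum_eq0 => v.
rewrite (Rsum_ext w); last by move=> o; rewrite (flatmx0 (f o)) (flatmx0 v) eqxx.
by rewrite /= Rmult_1_r Rminus_diag Rabs_R0.
Qed.

Lemma l1_dist_unif_cons k (f : Om -> 'cV[F2]_k.+1) w :
  l1_dist_unif f w <= Rsum (fun b =>
    l1_dist_unif (fun o => dsubmx (f o : 'cV_(1 + k)))
                 (fun o => if f o ord0 ord0 == b then w o else 0)
    + Rabs (Rsum (fun o => w o * centered_eq (f o ord0 ord0) b))).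
Proof.
rewrite {1}/l1_dist_unif Rsum_cV_cons; apply: Rsum_le => b.
set wb := fun o => if f o ord0 ord0 == b then w o else 0.
have fiber v : Rsum (fun o => if (f o : 'cV_(1 + k)) == col_mx (const_mx b) v then w o else 0)
             = Rsum (fun o => if dsubmx (f o : 'cV_(1 + k)) == v then wb o else 0).
  by apply: Rsum_ext => o; rewrite col_mx_const_eqE /wb; case: (_ == b); case: (_ == v).
have head : Rsum (fun o => w o * centered_eq (f o ord0 ord0) b)
          = 2 ^ k * (Rsum wb * (/ 2) ^ k - Rsum w * (/ 2) ^ k.+1).
  have -> : Rsum (fun o => w o * centered_eq (f o ord0 ord0) b) = Rsum wb + - / 2 * Rsum w.
    rewrite -Rsum_scal -Rsum_add.
    by apply: Rsum_ext => o; rewrite /wb /centered_eq; case: ifP => _; ring.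
  have inv_pow : 2 ^ k * (/ 2) ^ k = 1 by rewrite -Rpow_mult_distr Rinv_r ?pow1; lra.
  transitivity (2 ^ k * (/ 2) ^ k * (Rsum wb + - / 2 * Rsum w)); first by rewrite inv_pow; ring.
  by rewrite /=; ring.
have -> : Rabs (Rsum (fun o => w o * centered_eq (f o ord0 ord0) b))
        = Rsum (fun v : 'cV[F2]_k => Rabs (Rsum wb * (/ 2) ^ k - Rsum w * (/ 2) ^ k.+1)).
  rewrite Rsum_const card_cV_F2 head Rabs_mult Rabs_pos_eq //.
  by apply: pow_le; lra.
rewrite /l1_dist_unif -Rsum_add; apply: Rsum_le => v; rewrite fiber.
by apply: Rle_trans (Rabs_triang _ _); right; congr Rabs; lra.
Qed.

Lemma Rabs_Rsum_fiber (g : Om -> F2) (P : pred Om) (X : Om -> R) :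
  {in P &, forall o o', g o = g o'} ->
  Rsum (fun b : F2 => Rabs (Rsum (fun o => if P o then (if g o == b then X o else 0) else 0)))
  = Rabs (Rsum (fun o => if P o then X o else 0)).
Proof.
move=> g_const; case: (pickP P) => [o0 Po0 | P0]; last first.
  have sum0 (Y : Om -> R) : Rsum (fun o => if P o then Y o else 0) = 0.
    by apply: Rsum_eq0 => o; rewrite P0.
  by rewrite sum0 Rabs_R0; apply: Rsum_eq0 => b; rewrite sum0 Rabs_R0.
rewrite -(Rsum_pred1C (g o0) (fun _ => Rabs (Rsum (fun o => if P o then X o else 0)))).
apply: Rsum_ext => b; case: eqP => [<-|gb].
  by congr Rabs; apply: Rsum_ext => o; case Po: (P o) => //; rewrite (g_const o o0) ?eqxx.
rewrite Rsum_eq0 ?Rabs_R0 // => o; case Po: (P o) => //.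
by rewrite (g_const o o0) //; case: eqP.
Qed.

Lemma bit_bias_ge_uncond k (f : Om -> 'cV[F2]_k) st w j :
  Rsum (fun b => Rabs (Rsum (fun o => w o * centered_eq (f o j ord0) b))) <= bit_bias f st w j.
Proof.
apply: Rsum_le => b; apply: Rle_trans _ (Rabs_Rsum_le _); right; congr Rabs.
rewrite Rsum_swap; apply: Rsum_ext => o.
by rewrite (Rsum_pred1C (st j o) (fun _ => w o * centered_eq (f o j ord0) b)).
Qed.

Lemma bit_bias_tail k (f : Om -> 'cV[F2]_k.+1) st w (j : 'I_k) :
  (forall o o', st (lift ord0 j) o = st (lift ord0 j) o' -> f o ord0 ord0 = f o' ord0 ord0) ->
  Rsum (fun b => bit_bias (fun o => dsubmx (f o : 'cV_(1 + k))) (fun i => st (lift ord0 i))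
                          (fun o => if f o ord0 ord0 == b then w o else 0) j)
  = bit_bias f st w (lift ord0 j).
Proof.
move=> det; rewrite /bit_bias Rsum_swap; apply: Rsum_ext => b'.
rewrite Rsum_swap; apply: Rsum_ext => s.
rewrite -(Rabs_Rsum_fiber (g := fun o => f o ord0 ord0)
                          (P := fun o => st (lift ord0 j) o == s)); last first.
  by move=> o o' /eqP so /eqP so'; apply: det; rewrite so so'.
apply: Rsum_ext => b; congr Rabs; apply: Rsum_ext => o.
have -> : dsubmx (f o : 'cV_(1 + k)) j ord0 = f o (lift ord0 j) ord0.
  by rewrite mxE; congr (f o _ _); apply: val_inj.
by case: ifP => _ //; case: ifP => _ //; ring.
Qed.

Lemma l1_dist_unif_le_bit_bias k (f : Om -> 'cV[F2]_k) (st : 'I_k -> Om -> St) w :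
  (forall i j : 'I_k, ltn i j -> forall o o', st j o = st j o' -> f o i ord0 = f o' i ord0) ->
  l1_dist_unif f w <= Rsum (bit_bias f st w).
Proof.
elim: k f st w => [|k IH] f st w det.
  by rewrite l1_dist_unif_cV0 /Rsum big_ord0; lra.
apply: Rle_trans (l1_dist_unif_cons f w) _.
have -> : Rsum (bit_bias f st w)
          = bit_bias f st w ord0 + Rsum (fun j : 'I_k => bit_bias f st w (lift ord0 j)).
  by rewrite /Rsum big_ord_recl.
rewrite Rsum_add Rplus_comm.
apply: Rplus_le_compat; first exact: bit_bias_ge_uncond.
have det_tail (i j : 'I_k) : ltn i j -> forall o o', st (lift ord0 j) o = st (lift ord0 j) o' ->
    dsubmx (f o : 'cV_(1 + k)) i ord0 = dsubmx (f o' : 'cV_(1 + k)) i ord0.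
  move=> ij o o' so; rewrite !mxE; apply: (det _ (lift ord0 j)) so.
  by rewrite /= /bump /= !add1n ltnS.
apply: Rle_trans (Rsum_le (fun b => IH _ _ _ det_tail)) _.
rewrite Rsum_swap; apply: Rsum_le => j; rewrite bit_bias_tail; first exact: Rle_refl.
by move=> o o'; apply: (det ord0 (lift ord0 j)).
Qed.

End Hybrid.

Section PrefixRows.
Local Close Scope R_scope.
Local Open Scope ring_scope.
Variables m n : nat.
Implicit Types (t : 'I_m) (A B : 'M[F2]_(m, n)).

Definition prefix_rows t A : 'M[F2]_(m, n) := \matrix_(i, l) if ltn i t then A i l else 0.

Lemma prefix_eqE t B A : prefix_eq t B A = (prefix_rows t B == prefix_rows t A).
Proof.
apply/forallP/eqP => [BA | BA j].
  apply/matrixP => i l; rewrite !mxE; case: ifP => // it.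
  by have := BA i; rewrite it /= => /eqP/rowP/(_ l); rewrite !mxE.
apply/implyP => jt; apply/eqP/rowP => l.
by have := congr1 (fun M : 'M[F2]_(m, n) => M j l) BA; rewrite !mxE jt.
Qed.

Lemma mulmx_prefix_rows t t' A (x : 'cV[F2]_n) :
  ltn t' t -> (A *m x) t' ord0 = (prefix_rows t A *m x) t' ord0.
Proof. by move=> t't; rewrite !mxE; apply: eq_bigr => l _; rewrite mxE t't. Qed.

Lemma mulmx_row_dotF2 t A (x : 'cV[F2]_n) : (A *m x) t ord0 = dotF2 (row t A) x.
Proof. by rewrite /dotF2 -row_mul [RHS]mxE. Qed.

End PrefixRows.

Lemma enum_val_ord_lt m (T : {set 'I_m}) (i j : 'I_#|T|) :
  ltn i j -> ltn (enum_val i) (enum_val j).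
Proof.
move=> ij; have x0 := enum_val i.
rewrite (enum_val_nth x0 i) (enum_val_nth x0 j).
have lt_trans : transitive (relpre (@nat_of_ord m) ltn) by move=> a b c; apply: ltn_trans.
have sorted_T : sorted (relpre val ltn) (enum T).
  rewrite /enum_mem; apply: sorted_filter => //.
  by rewrite -enumT -sorted_map val_enum_ord; apply: iota_ltn_sorted.
by apply: (sorted_ltn_nth lt_trans x0 sorted_T) => //; rewrite inE -cardE ltn_ord.
Qed.

Lemma card_setC_ge m (S : {set 'I_m}) eta :
  INR #|S| <= eta * INR m -> (1 - eta) * INR m <= INR #|~: S|.
Proof.
have : INR #|S| + INR #|~: S| = INR m by rewrite -plus_INR plusE cardsC card_ord.
lra.
Qed.

Lemma exponent_budget n (zeta Delta alpha : R) : 2 * Delta + zeta <= alpha ->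
  Rpower 2 (- (alpha * INR n)) * (2 ^ n * Rpower 2 (- (INR n * (1 - zeta))))
  <= Rpower 2 (- (Delta * INR n)) ^ 2.
Proof.
move=> budget; rewrite -(Rpower_pow n 2); last lra.
rewrite /= Rmult_1_r -!Rpower_plus; apply: Rle_Rpower; first lra.
by have := pos_INR n; nra.
Qed.

Lemma centered_eq_sign2 (a b : F2) : centered_eq a b = / 2 * (sign2 b * sign2 a).
Proof.
by rewrite /centered_eq /sign2; case: (F2_0or1 a) => ->; case: (F2_0or1 b) => -> /=; lra.
Qed.

Section InnerProductBits.
Variables m n : nat.
Variables (pA : 'M[F2]_(m, n) -> R) (px : 'cV[F2]_n -> R).
Hypotheses (pA_ge0 : forall A, 0 <= pA A) (pA_sum1 : Rsum pA = 1).
Hypotheses (px_ge0 : forall x, 0 <= px x) (px_sum1 : Rsum px = 1).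
Implicit Types (t : 'I_m) (A P : 'M[F2]_(m, n)) (r : 'rV[F2]_n) (T : {set 'I_m}).

Definition class_weight t P : R :=
  Rsum (fun A => if prefix_rows t A == P then pA A else 0).

Definition row_weight t P r : R :=
  Rsum (fun A => if (prefix_rows t A == P) && (row t A == r) then pA A else 0).

Lemma class_weight_ge0 t P : 0 <= class_weight t P.
Proof. by apply: Rsum_ge0 => A; case: ifP => _ //; lra. Qed.

Lemma row_weight_ge0 t P r : 0 <= row_weight t P r.
Proof. by apply: Rsum_ge0 => A; case: ifP => _ //; lra. Qed.

Lemma Rsum_row_weight t P : Rsum (row_weight t P) = class_weight t P.
Proof.
rewrite /row_weight Rsum_swap; apply: Rsum_ext => A.
rewrite (Rsum_ext (fun r =>
  if row t A == r then (if prefix_rows t A == P then pA A else 0) else 0)).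
  by rewrite Rsum_pred1C.
by move=> r; case: (_ == P); case: (row t A == r).
Qed.

Lemma class_chi_sum t P y :
  Rsum (fun A => if prefix_rows t A == P then pA A * chi (row t A) y else 0)
  = Rsum (fun r => row_weight t P r * chi r y).
Proof.
rewrite (Rsum_ext (fun r => Rsum (fun A => if row t A == r then
    (if prefix_rows t A == P then pA A * chi r y else 0) else 0))); last first.
  move=> r; rewrite Rmult_comm -Rsum_scal; apply: Rsum_ext => A.
  by case: (_ == P); case: (row t A == r) => /=; ring.
rewrite Rsum_swap; apply: Rsum_ext => A.
by rewrite (Rsum_pred1C (row t A) (fun r => if prefix_rows t A == P then pA A * chi r y else 0)).
Qed.

Lemma cond_row_weight t A0 r :
  cond_row pA A0 t r = row_weight t (prefix_rows t A0) r / class_weight t (prefix_rows t A0).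
Proof. by rewrite /cond_row; congr Rdiv; apply: Rsum_ext => B; rewrite prefix_eqE. Qed.

Lemma row_weight_le t A0 n' r : 0 < pA A0 -> n' <= H_inf (cond_row pA A0 t) ->
  row_weight t (prefix_rows t A0) r <= class_weight t (prefix_rows t A0) * Rpower 2 (- n').
Proof.
move=> pA0 ent.
have row0 : 0 < row_weight t (prefix_rows t A0) (row t A0).
  apply: Rlt_le_trans pA0 (Rle_trans _ _ _ _ (Rsum_ge_term A0 _)).
    by rewrite !eqxx; apply: Rle_refl.
  by move=> A; case: ifP => _ //; lra.
have class0 : 0 < class_weight t (prefix_rows t A0).
  rewrite -Rsum_row_weight; apply: Rlt_le_trans row0 (Rsum_ge_term (row t A0) _) => r'.
  exact: row_weight_ge0.
have := H_inf_mass_le (ex_intro _ (row t A0) _) ent r.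
rewrite !cond_row_weight => /(_ (Rdiv_lt_0_compat _ _ row0 class0)) le_r.
have -> : row_weight t (prefix_rows t A0) r
        = class_weight t (prefix_rows t A0) * (row_weight t (prefix_rows t A0) r
          / class_weight t (prefix_rows t A0)) by field; lra.
by apply: Rmult_le_compat_l => //; lra.
Qed.

Lemma class_bias_le t P a n' E :
  (forall x, px x <= a) ->
  (forall A, 0 < pA A -> prefix_rows t A = P -> n' <= H_inf (cond_row pA A t)) ->
  0 <= E -> a * (2 ^ n * Rpower 2 (- n')) <= E ^ 2 ->
  Rsum (fun y => px y * Rabs (Rsum (fun A =>
    if prefix_rows t A == P then pA A * chi (row t A) y else 0)))
  <= E * class_weight t P.
Proof.
move=> pxa ent E0 budget.
rewrite (Rsum_ext (fun y => px y * Rabs (Rsum (fun r => row_weight t P r * chi r y)))); last first.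
  by move=> y; rewrite class_chi_sum.
case: (classic (exists A0, prefix_rows t A0 = P /\ 0 < pA A0)) => [[A0 [PA0 pA0]] | empty].
  subst P.
  set X := Rsum _.
  have X0 : 0 <= X by apply: Rsum_ge0 => y; apply: Rmult_le_pos => //; apply: Rabs_pos.
  have Z0 := class_weight_ge0 t (prefix_rows t A0).
  have := fourier_l1_sq_le px_ge0 px_sum1 pxa (row_weight_ge0 t _)
            (fun r => row_weight_le r pA0 (ent _ pA0 erefl)).
  rewrite -/X Rsum_row_weight => X_sq.
  have : X ^ 2 <= (E * class_weight t (prefix_rows t A0)) ^ 2.
    apply: Rle_trans X_sq _; set Z := class_weight _ _.
    have -> : a * (2 ^ n * (Z * Rpower 2 (- n') * Z))
            = a * (2 ^ n * Rpower 2 (- n')) * (Z * Z) by ring.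
    have -> : (E * Z) ^ 2 = E ^ 2 * (Z * Z) by ring.
    by apply: Rmult_le_compat_r; nra.
  have := Rmult_le_pos _ _ E0 Z0; nra.
have row0 r : row_weight t P r = 0.
  apply: Rsum_eq0 => A; case: andP => // -[/eqP PA _].
  by case: (pA_ge0 A) => // pA0; case: empty; exists A.
rewrite -Rsum_row_weight (Rsum_eq0 row0) Rmult_0_r Rsum_eq0; first exact: Rle_refl.
by move=> y; rewrite Rsum_eq0 ?Rabs_R0 ?Rmult_0_r // => r; rewrite row0 Rmult_0_l.
Qed.

Definition outcome := ('M[F2]_(m, n) * 'cV[F2]_n)%type.

Definition weight (o : outcome) : R := pA o.1 * px o.2.

Definition AxT (T : {set 'I_m}) (o : outcome) : 'cV[F2]_#|T| := proj_T T (mulmx o.1 o.2).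

Definition revealed (T : {set 'I_m}) (j : 'I_#|T|) (o : outcome) : outcome :=
  (prefix_rows (enum_val j) o.1, o.2).

Lemma stat_dist_AxT T :
  stat_dist (dist_AxT pA px T) (@uniform _) = / 2 * l1_dist_unif (AxT T) weight.
Proof.
have weight_sum1 : Rsum weight = 1.
  rewrite Rsum_pair -pA_sum1; apply: Rsum_ext => A.
  by rewrite /weight /= Rsum_scal px_sum1 Rmult_1_r.
rewrite /stat_dist /l1_dist_unif weight_sum1 Rmult_1_l /uniform card_cV_F2 pow_inv.
congr (_ * _); apply: Rsum_ext => v; congr (Rabs (_ - _)).
by rewrite /dist_AxT Rsum_pair.
Qed.

Lemma revealed_determines_AxT T (i j : 'I_#|T|) : ltn i j -> forall o o',
  revealed j o = revealed j o' -> AxT T o i ord0 = AxT T o' i ord0.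
Proof.
move=> ij [A x] [A' x'] [AA' <-].
have lt := enum_val_ord_lt ij.
have AxT_i B y : AxT T (B, y) i ord0 = (mulmx B y) (enum_val i) ord0 by rewrite mxE.
by rewrite !AxT_i (mulmx_prefix_rows A x lt) AA' -(mulmx_prefix_rows A' x lt).
Qed.

Lemma bit_bias_AxT T j : bit_bias (AxT T) (@revealed T) weight j
  = Rsum (fun P => Rsum (fun y => px y * Rabs (Rsum (fun A =>
      if prefix_rows (enum_val j) A == P then pA A * chi (row (enum_val j) A) y else 0)))).
Proof.
set t := enum_val j.
set g := fun P y => Rsum (fun A => if prefix_rows t A == P then pA A * chi (row t A) y else 0).
have inner b P y : Rsum (fun o => if revealed j o == (P, y)
                     then weight o * centered_eq (AxT T o j ord0) b else 0)
                   = (/ 2 * sign2 b) * (px y * g P y).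
  rewrite Rsum_pair /g -!Rsum_scal; apply: Rsum_ext => A.
  rewrite (Rsum_ext (fun x => if x == y then (if prefix_rows t A == P
             then pA A * px x * centered_eq (AxT T (A, x) j ord0) b else 0) else 0)); last first.
    by move=> x; rewrite /revealed /weight xpair_eqE /= -/t; case: (_ == P); case: (x == y).
  rewrite Rsum_pred1; case: ifP => _; last by ring.
  by rewrite /AxT /proj_T mxE mulmx_row_dotF2 centered_eq_sign2 /chi /= -/t; ring.
have sign_half b : Rabs (/ 2 * sign2 b) = / 2.
  rewrite Rabs_mult Rabs_pos_eq; last lra.
  by rewrite /sign2; case: ifP => _; rewrite ?Rabs_Ropp Rabs_R1; lra.
rewrite /bit_bias (Rsum_ext (fun _ => / 2 * Rsum (fun P => Rsum (fun y => px y * Rabs (g P y))))).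
  by rewrite Rsum_const card_Fp //= /g; field.
move=> b; rewrite Rsum_pair -Rsum_scal; apply: Rsum_ext => P.
rewrite -Rsum_scal; apply: Rsum_ext => y.
by rewrite inner Rabs_mult sign_half Rabs_mult (Rabs_pos_eq (px y)).
Qed.

Lemma bit_bias_AxT_le T j a n' E :
  (forall x, px x <= a) ->
  (forall A, 0 < pA A -> n' <= H_inf (cond_row pA A (enum_val j))) ->
  0 <= E -> a * (2 ^ n * Rpower 2 (- n')) <= E ^ 2 ->
  bit_bias (AxT T) (@revealed T) weight j <= E.
Proof.
move=> pxa ent E0 budget; rewrite bit_bias_AxT.
apply: Rle_trans (Rsum_le (fun P => class_bias_le pxa (fun A pA0 _ => ent A pA0) E0 budget)) _.
rewrite Rsum_scal /class_weight Rsum_swap (Rsum_ext pA) ?pA_sum1 ?Rmult_1_r; first exact: Rle_refl.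
by move=> A; rewrite (Rsum_pred1C (prefix_rows (enum_val j) A) (fun _ => pA A)).
Qed.

End InnerProductBits.

Theorem lemmaG9 (m n : nat) (eta zeta Delta alpha : R)
  (pA : 'M[F2]_(m, n) -> R) (px : 'cV[F2]_n -> R) :
  ltn O m -> leq m n ->
  0 <= eta <= 1 -> 0 < Delta -> 2 * Delta + zeta <= alpha ->
  is_distr pA -> block_source pA eta (INR n * (1 - zeta)) ->
  is_distr px -> alpha * INR n <= H_inf px ->
  exists T : {set 'I_m},
    (1 - eta) * INR m <= INR #|T| /\
    stat_dist (dist_AxT pA px T) (@uniform _)
      <= INR #|T| * Rpower 2 (- (Delta * INR n)).
Proof.
move=> _ _ _ _ budget [pA_ge0 pA_sum1] [S [card_S ent_A]] [px_ge0 px_sum1] ent_x.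
exists (~: S); split; first exact: card_setC_ge.
set E := Rpower 2 (- (Delta * INR n)).
have E0 : 0 <= E by left; apply: exp_pos.
have bias_le j : bit_bias (AxT (~: S)) (@revealed _ _ (~: S)) (weight pA px) j <= E.
  apply: (bit_bias_AxT_le pA_ge0 pA_sum1 px_ge0 px_sum1
            (H_inf_mass_le (distr_has_pos px_sum1) ent_x) _ E0 (exponent_budget n budget)).
  by move=> A pA0; apply: (ent_A A pA0); have := enum_valP j; rewrite inE.
rewrite stat_dist_AxT //.
apply: (Rle_trans _ (/ 2 * Rsum (fun _ : 'I_#|~: S| => E))).
  apply: Rmult_le_compat_l; first lra.
  exact: Rle_trans (l1_dist_unif_le_bit_bias _ (@revealed_determines_AxT _ _ _)) (Rsum_le bias_le).
by rewrite Rsum_const card_ord; have := pos_INR #|~: S|; nra.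
Qed.
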